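(* Let $k=\mathbb{F}_3$, equip $k^7$ with the bilinear form $\langle x,y\rangle=x_1y_7+x_2y_6+\dots+x_7y_1$, let $SO_7$ be the corresponding special orthogonal group and $B\subset SO_7$ the Borel subgroup of upper triangular matrices in $SO_7$. Let $A$ be a $7\times7$ matrix over $k$ self-adjoint for this form, and let \[ X_A(k)=\{gB(k)\in SO_7(k)/B(k):\ M=g^{-1}Ag \text{ satisfies } M_{ij}=0 \text{ for all } (i,j)\in P\}, \] where $P=\{(3,1),(4,1),(5,1),(5,2),(6,1),(6,2),(6,3),(7,1),(7,2),(7,3),(7,4),(7,5)\}$. If there is no nonzero $v\in k^7$ such that $\langle v,v\rangle=\langle v,Av\rangle=\langle Av,Av\rangle=\langle Av,A^2v\rangle=0$ and $\langle A^2v,A^2v\rangle$ is a square in $k$, then $X_A(k)=\emptyset$.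
   Context: $M_{ij}$ denotes the entry in row $i$ and column $j$. The defining condition of $X_A(k)$ is invariant under right multiplication of $g$ by $B(k)$, so $X_A(k)$ is well defined. *)

From HB Require Import structures.
From mathcomp Require Import all_boot all_order all_algebra.
Set Implicit Arguments. Unset Strict Implicit. Unset Printing Implicit Defensive.
Import GRing.Theory.
Local Open Scope ring_scope.

Notation k := ('F_3).
Notation vec := ('cV[k]_7).
Notation mat := ('M[k]_7).

(* <x,y> = x_1 y_7 + x_2 y_6 + ... + x_7 y_1 (0-based: i pairs with 6 - i) *)
Definition bform (x y : vec) : k := \sum_(i < 7) x i 0 * y (rev_ord i) 0.

Definition self_adjoint (A : mat) : Prop :=
  forall x y : vec, bform (A *m x) y = bform x (A *m y).

Definition SO7 : {set mat} :=
  [set g : mat | [forall x : vec, forall y : vec, bform (g *m x) (g *m y) == bform x y]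
                 && (\det g == 1)].

Definition Bor : {set mat} :=
  [set b in SO7 | [forall i : 'I_7, forall j : 'I_7, (j < i)%N ==> (b i j == 0)]].

(* The pattern P, with 1-based indices as in the paper *)
Definition inP (i j : nat) : bool :=
  (i, j) \in [:: (3,1); (4,1); (5,1); (5,2); (6,1); (6,2); (6,3);
                 (7,1); (7,2); (7,3); (7,4); (7,5)]%N.

Definition cond (A g : mat) : bool :=
  let M := invmx g *m A *m g in
  [forall i : 'I_7, forall j : 'I_7, inP i.+1 j.+1 ==> (M i j == 0)].

Definition lcoset (g : mat) : {set mat} := [set g *m b | b in Bor].

Definition XA (A : mat) : {set {set mat}} :=
  [set lcoset g | g in SO7 & cond A g].

Definition is_square (a : k) : Prop := exists c : k, a = c * c.

From mathcomp Require Import all_boot all_order all_algebra zify.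
Set Implicit Arguments. Unset Strict Implicit. Unset Printing Implicit Defensive.
Import GRing.Theory.
Local Open Scope ring_scope.

(* If gB(k) lies in X_A(k), then M = g^-1 A g kills the pattern P, so M maps
   e_1 into <e_1, e_2> and <e_1, e_2> into <e_1, ..., e_4>.  Since g is an
   isometry, v = g e_1 has Gram values <A^a v, A^b v> = <M^a e_1, M^b e_1>,
   and a vector supported on the first m coordinates is orthogonal to one
   supported on the first 7 - m.  Hence all the required values vanish, and
   <M^2 e_1, M^2 e_1> = (M^2 e_1)_4^2 is a square. *)

Definition supp_lt {R : nmodType} {n : nat} (m : nat) (x : 'cV[R]_n) : Prop :=
  forall i : 'I_n, (m <= i)%N -> x i 0 = 0.

Lemma supp_lt_delta {R : pzSemiRingType} {n : nat} :
  supp_lt 1 (delta_mx 0 0 : 'cV[R]_n.+1).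
Proof. by move=> i; rewrite mxE; case: i => -[]. Qed.

Lemma mulmx_supp_lt {R : pzSemiRingType} {m n : nat} (a b : nat)
    (M : 'M[R]_(m, n)) (x : 'cV[R]_n) :
  (forall (i : 'I_m) (j : 'I_n), (a <= i)%N -> (j < b)%N -> M i j = 0) ->
  supp_lt b x -> supp_lt a (M *m x).
Proof.
move=> Mblock xb i ai; rewrite mxE big1 // => j _.
by case: (ltnP j b) => jb; [rewrite Mblock ?mul0r | rewrite xb ?mulr0].
Qed.

Lemma bform_supp_lt (m n : nat) (x y : vec) :
  supp_lt m x -> supp_lt n y -> (m + n <= 7)%N -> bform x y = 0.
Proof.
move=> xm yn mn7; rewrite /bform big1 // => i _.
case: (leqP m i) => im; first by rewrite xm ?mul0r.
by rewrite yn ?mulr0 //=; lia.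
Qed.

Lemma bform_supp_lt4 (x : vec) :
  supp_lt 4 x -> bform x x = x (inord 3) 0 * x (inord 3) 0.
Proof.
move=> x4; have rev3 : rev_ord (inord 3 : 'I_7) = inord 3.
  by apply/val_inj; rewrite /= inordK.
rewrite /bform (bigD1 (inord 3)) //= rev3 big1 ?addr0 // => i i_ne3.
have {i_ne3} : (i : nat) != 3%N.
  by apply: contra i_ne3 => /eqP i3; apply/eqP/val_inj; rewrite /= inordK.
case: (leqP 4 i) => i4 i_ne3; first by rewrite x4 ?mul0r.
by rewrite [x (rev_ord i) 0]x4 ?mulr0 //=; lia.
Qed.

Lemma SO7_bform (g : mat) (x y : vec) :
  g \in SO7 -> bform (g *m x) (g *m y) = bform x y.
Proof. by rewrite inE => /andP[/forallP/(_ x)/forallP/(_ y)/eqP]. Qed.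

Lemma SO7_unitmx (g : mat) : g \in SO7 -> g \in unitmx.
Proof. by rewrite inE unitmxE => /andP[_ /eqP->]; rewrite unitr1. Qed.

Lemma inP_col1 (i j : 'I_7) : (2 <= i)%N -> (j < 1)%N -> inP i.+1 j.+1.
Proof. by case: i j => [[|[|[|[|[|[|[|i]]]]]]] ?] [[|[|j]] ?]. Qed.

Lemma inP_cols12 (i j : 'I_7) : (4 <= i)%N -> (j < 2)%N -> inP i.+1 j.+1.
Proof. by case: i j => [[|[|[|[|[|[|[|i]]]]]]] ?] [[|[|[|j]]] ?]. Qed.

Lemma cond_inP (A g : mat) (i j : 'I_7) :
  cond A g -> inP i.+1 j.+1 -> (invmx g *m A *m g) i j = 0.
Proof. by move=> /forallP/(_ i)/forallP/(_ j)/implyP/[apply]/eqP. Qed.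

Lemma conj_mulmx {R : pzSemiRingType} {n p : nat} (A g M : 'M[R]_n)
    (x : 'M[R]_(n, p)) :
  A *m g = g *m M -> A *m (g *m x) = g *m (M *m x).
Proof. by move=> AgM; rewrite !mulmxA AgM. Qed.

Theorem mainTheorem10 (A : 'M['F_3]_7) :
  self_adjoint A ->
  ~ (exists v : 'cV['F_3]_7,
        [/\ v != 0, bform v v = 0, bform v (A *m v) = 0,
            bform (A *m v) (A *m v) = 0 /\ bform (A *m v) (A *m A *m v) = 0
          & is_square (bform (A *m A *m v) (A *m A *m v))]) ->
  XA A = set0.
Proof.
move=> _ no_v; apply/setP => C; rewrite inE; apply/imsetP => -[g].
rewrite inE => /andP[gSO gcond] _; apply: no_v.
set M := invmx g *m A *m g; set e : vec := delta_mx 0 0.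
have AgM : A *m g = g *m M by rewrite /M !mulmxA mulmxV ?mul1mx ?SO7_unitmx.
have e1 : supp_lt 1 e := supp_lt_delta.
have u2 : supp_lt 2 (M *m e).
  by apply: mulmx_supp_lt e1 => i j ? ?; rewrite cond_inP ?inP_col1.
have w4 : supp_lt 4 (M *m (M *m e)).
  by apply: mulmx_supp_lt u2 => i j ? ?; rewrite cond_inP ?inP_cols12.
have Av : A *m (g *m e) = g *m (M *m e) := conj_mulmx e AgM.
have AAv : A *m A *m (g *m e) = g *m (M *m (M *m e)).
  by rewrite -mulmxA Av (conj_mulmx _ AgM).
exists (g *m e); rewrite AAv Av !(SO7_bform _ _ gSO).
split.
- apply/eqP => ge0.
  have : e = 0 by rewrite -(mulKmx (SO7_unitmx gSO) e) ge0 mulmx0.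
  by move/matrixP/(_ 0 0)/eqP; rewrite !mxE oner_eq0.
- exact: (bform_supp_lt e1 e1).
- exact: (bform_supp_lt e1 u2).
- by split; [exact: (bform_supp_lt u2 u2) | exact: (bform_supp_lt u2 w4)].
- by exists ((M *m (M *m e)) (inord 3) 0); exact: bform_supp_lt4.
Qed.
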